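(* Let $n_1,\dots,n_s\ge0$, $A=\mathrm{diag}(\mathbb{J}_{1,n_1}(0),\dots,\mathbb{J}_{s,n_s}(0))$, and let $B$ satisfy $AB+BA=0$. Write $B=(B_{ij})_{1\le i,j\le s}$ in the block form of $A$ ($B_{ij}$ of size $in_i\times jn_j$), so that $B_{ij}=\mathrm{LB}^-(i,j,(B^{(1)}_{ij},\dots,B^{(\min(i,j))}_{ij}))$ with $n_i\times n_j$ matrices $B^{(k)}_{ij}$. Then: (1) $B$ is similar to a block upper-triangular matrix whose diagonal blocks are, up to order, the matrices $B^{(1)}_{ii}$ (each appearing $\lceil i/2\rceil$ times) and $-B^{(1)}_{ii}$ (each appearing $\lfloor i/2\rfloor$ times), $1\le i\le s$; (2) $\chi^B(X)=\prod_{i=1}^s\chi^{B_{ii}}(X)$; (3) $\chi^B(X)=\prod_{i=1}^s\big(\chi^{B^{(1)}_{ii}}(X)\big)^{\lceil i/2\rceil}\big(\chi^{-B^{(1)}_{ii}}(X)\big)^{\lfloor i/2\rfloor}$.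
   Context: $\chi^M(X)$ is the characteristic polynomial of a square matrix $M$. $\mathbb{J}_{i,k}(0)$ is the $i\times i$ block matrix with $k\times k$ blocks whose $(l,l+1)$ blocks are $I_k$ ($1\le l\le i-1$) and all other blocks $0$. For matrices $C_1,\dots,C_k$ of the same size, $k=\min(s,t)$, the $s\times t$ block matrix $\mathrm{LB}^-(s,t,(C_1,\dots,C_k))$ is: if $s\ge t$, block $(i,j)$ is $(-1)^{i-1}C_{j-i+1}$ for $1\le i\le j\le t$ and $0$ otherwise; if $s\le t$, block $(i,t-s+j)$ is $(-1)^{i-1}C_{j-i+1}$ for $1\le i\le j\le s$ and all other blocks are $0$. (Every $B$ anti-commuting with $A$ has this block form.) *)

From HB Require Import structures.
From mathcomp Require Import all_boot all_order all_algebra.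
Set Implicit Arguments. Unset Strict Implicit. Unset Printing Implicit Defensive.
Import GRing.Theory.
Local Open Scope ring_scope.

Definition Jblk (F : fieldType) (k m : nat) : 'M[F]_(\sum_(l < k) m) :=
  \mxblock_(l < k, l' < k)
    (if val l' == (val l).+1 then (1%:M : 'M[F]_m) else 0).

(* size of the i-th diagonal block (block index i : 'I_s stands for i+1) *)
Definition bsz (s : nat) (n : 'I_s -> nat) (i : 'I_s) : nat :=
  (\sum_(l < i.+1) n i)%N.

Definition Amx (F : fieldType) (s : nat) (n : 'I_s -> nat)
  : 'M[F]_(\sum_(i < s) bsz n i) :=
  \mxdiag_(i < s) Jblk F i.+1 (n i).

(* LB^-(s,t,(C_1,...,C_min(s,t))), with C given as a function of the index
   k (only k = 1..min(s,t) are used).  0-based block indices bi, bj;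
   with d = t - s (truncated, = 0 when s >= t), block (bi,bj) is
   (-1)^bi C_(bj-d-bi+1) if bi + d <= bj, and 0 otherwise. *)
Definition LBm (F : fieldType) (s t p q : nat) (C : nat -> 'M[F]_(p, q))
  : 'M[F]_(\sum_(l < s) p, \sum_(l < t) q) :=
  \mxblock_(bi < s, bj < t)
    (if (val bi + (t - s) <= val bj)%N
     then (-1) ^+ val bi *: C (val bj - (t - s) - val bi).+1
     else 0).

(* a square matrix packaged with its size, for comparing multisets of
   diagonal blocks of different sizes *)
Definition sqm (F : fieldType) (p : nat) (M : 'M[F]_p) : {p : nat & 'M[F]_p} :=
  Tagged (fun p => 'M[F]_p) M.

Definition expected_diag (F : fieldType) (s : nat) (n : 'I_s -> nat)
  (C1 : forall i : 'I_s, 'M[F]_(n i)) : seq {p : nat & 'M[F]_p} :=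
  flatten (map (fun i : 'I_s =>
    nseq (uphalf i.+1) (sqm (C1 i)) ++ nseq (i.+1)./2 (sqm (- C1 i)))
    (enum 'I_s)).

From HB Require Import structures.
From mathcomp Require Import all_boot all_order all_algebra perm zify.
Set Implicit Arguments. Unset Strict Implicit. Unset Printing Implicit Defensive.
Import GRing.Theory.
Local Open Scope ring_scope.
Import tagnat.

(* Index the rows of B by triples (i, l, r), all 0-based: the l-th (l <= i)
   of the i+1 diagonal sub-blocks of size n_i of the i-th diagonal block of
   A, and r < n_i.  By the LB^- shape, the sub-block of B at ((i, l), (j, l')) is
   (-1)^l B_ij^(l' - l - max(j - i, 0) + 1) if l + max(j - i, 0) <= l', and 0
   otherwise; so it vanishes unless the height j - l' is at most i - l, with
   equality only when i <= j.  Listing the pairs (i, l) by decreasing height,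
   then increasing i, is therefore a permutation of the basis which makes B
   block upper triangular with diagonal blocks (-1)^l B_ii^(1).  The parities
   of l <= i give the multiplicities ceil((i+1)/2) and floor((i+1)/2), and
   (2) holds because each B_ii = LB^-(i, i, _) is itself block upper
   triangular with the same diagonal blocks. *)

Lemma det_castmx (R : comNzRingType) n1 n2 (e : n1 = n2) (A : 'M[R]_n1) :
  \det (castmx (e, e) A) = \det A.
Proof. by case: n2 / e; rewrite castmx_id. Qed.

Lemma det_mxblock_utrig (R : comNzRingType) p (p_ : 'I_p -> nat)
    (A : 'M[R]_(\sum_(i < p) p_ i)) :
  (forall i j : 'I_p, (j < i)%N -> submxblock A i j = 0) ->
  \det A = \prod_(i < p) \det (submxblock A i i).
Proof.
elim: p p_ A => [|q IHq] q_ A A_utrig.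
  rewrite [RHS]big_ord0.
  rewrite -(det_castmx (big_ord0 _ _ _ q_ : \sum_(i < 0) q_ i = 0)%N).
  exact: det_mx00.
rewrite -[A in LHS]submxblockK mxblock_recul det_castmx.
have -> : \mxcol_i submxblock A (lift ord0 i) ord0 = 0.
  rewrite -(mxcol0 (p_ := q_ \o lift ord0)); apply: eq_mxcol => i.
  exact: A_utrig.
rewrite det_ublock big_ord_recl IHq => [|i j lt_ji].
  by congr (_ * _); apply: eq_bigr => i _; rewrite mxblockK.
by rewrite mxblockK A_utrig.
Qed.

Lemma char_poly_mxblock_utrig (R : comNzRingType) p (p_ : 'I_p -> nat)
    (A : 'M[R]_(\sum_(i < p) p_ i)) :
  (forall i j : 'I_p, (j < i)%N -> submxblock A i j = 0) ->
  char_poly A = \prod_(i < p) char_poly (submxblock A i i).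
Proof.
move=> A_utrig; rewrite /char_poly det_mxblock_utrig => [|i j lt_ji].
  apply: eq_bigr => i _; congr (\det _); apply/matrixP => a b.
  by rewrite !mxE -val_eqE eq_Rank eqxx val_eqE.
apply/matrixP => a b; have /matrixP/(_ a b) := A_utrig i j lt_ji.
rewrite !mxE -val_eqE eq_Rank -val_eqE (gtn_eqF lt_ji) => ->.
by rewrite mulr0n subr0.
Qed.

Lemma det_mxsub_bij (R : comNzRingType) n n' (f : 'I_n' -> 'I_n)
    (A : 'M[R]_n) :
  bijective f -> \det (mxsub f f A) = \det A.
Proof.
move=> f_bij; have e : n' = n by have := bij_eq_card f_bij; rewrite !card_ord.
case: n / e in f f_bij A *; pose sf := perm (bij_inj f_bij).
have -> : mxsub f f A = row_perm sf (col_perm sf A).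
  by apply/matrixP => i j; rewrite !mxE !permE.
rewrite row_permE col_permE !det_mulmx !det_perm odd_permV.
by rewrite mulrCA -signr_addb addbb mulr1.
Qed.

Lemma char_poly_mxsub_bij (R : comNzRingType) n n' (f : 'I_n' -> 'I_n)
    (A : 'M[R]_n) :
  bijective f -> char_poly (mxsub f f A) = char_poly A.
Proof.
move=> f_bij; rewrite /char_poly -(det_mxsub_bij (char_poly_mx A) f_bij).
congr (\det _); apply/matrixP => i j.
by rewrite !mxE (inj_eq (bij_inj f_bij)).
Qed.

Lemma mxsub_conj (R : pzSemiRingType) n n' (f : 'I_n' -> 'I_n)
    (A : 'M[R]_n) :
  mxsub f f A = rowsub f 1%:M *m A *m colsub f 1%:M.
Proof. by rewrite -rowsubE -mxsub_mul mulmx1. Qed.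

Lemma mul_rowsub1_colsub1 (R : pzSemiRingType) n n' (f : 'I_n' -> 'I_n) :
  injective f -> rowsub f 1%:M *m colsub f 1%:M = 1%:M :> 'M[R]_n'.
Proof.
move=> f_inj; rewrite -mxsub_mul mulmx1; apply/matrixP => i j.
by rewrite !mxE (inj_eq f_inj).
Qed.

Lemma mul_colsub1_rowsub1 (R : pzSemiRingType) n n' (f : 'I_n' -> 'I_n) :
  bijective f -> colsub f 1%:M *m rowsub f 1%:M = 1%:M :> 'M[R]_n.
Proof.
case=> g fK gK.
have -> : colsub f 1%:M = rowsub g 1%:M :> 'M[R]_(n, n').
  by apply/matrixP => i j; rewrite !mxE (can2_eq gK fK).
have -> : rowsub f 1%:M = colsub g 1%:M :> 'M[R]_(n', n).
  by apply/matrixP => i j; rewrite !mxE (can2_eq fK gK).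
exact/mul_rowsub1_colsub1/(can_inj gK).
Qed.

Lemma mxsub_bij_conj (R : pzSemiRingType) n n' (f : 'I_n' -> 'I_n)
    (A : 'M[R]_n) :
  bijective f -> A = colsub f 1%:M *m mxsub f f A *m rowsub f 1%:M.
Proof.
move=> f_bij; rewrite mxsub_conj !mulmxA mul_colsub1_rowsub1 // mul1mx.
by rewrite -mulmxA mul_colsub1_rowsub1 // mulmx1.
Qed.

Lemma prodr_odd (R : comPzSemiRingType) (h : bool -> R) m :
  \prod_(l < m) h (odd l) = h false ^+ uphalf m * h true ^+ m./2.
Proof.
elim: m h => [|m IHm] h; first by rewrite big_ord0 !expr0 mulr1.
rewrite big_ord_recl (IHm (h \o negb)) /= exprS -mulrA; congr (_ * _).
exact: mulrC.
Qed.

Lemma perm_map_odd_iota (T : eqType) (h : bool -> T) m :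
  perm_eq [seq h (odd l) | l <- iota 0 m]
          (nseq (uphalf m) (h false) ++ nseq m./2 (h true)).
Proof.
elim: m h => [|m IHm] h //=; rewrite perm_cons -add1n iotaDl -map_comp.
by apply: perm_trans (IHm (h \o negb)) _; rewrite perm_catC.
Qed.

Lemma prod_char_poly_signed (R : comNzRingType) p (M : 'M[R]_p) t :
  \prod_(l < t) char_poly ((-1) ^+ l *: M) =
  char_poly M ^+ uphalf t * char_poly (- M) ^+ t./2.
Proof.
under eq_bigr do rewrite -signr_odd.
rewrite (prodr_odd (fun b => char_poly ((-1) ^+ b *: M))).
by rewrite expr0 expr1 scale1r scaleN1r.
Qed.

Lemma char_poly_LBm (F : fieldType) t p (C : nat -> 'M[F]_p) :
  char_poly (LBm t t C) = \prod_(l < t) char_poly ((-1) ^+ l *: C 1%N).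
Proof.
rewrite char_poly_mxblock_utrig => [|l l' lt_l'l].
  by apply: eq_bigr => l _; rewrite mxblockK subnn addn0 leqnn subn0 subnn.
by rewrite mxblockK subnn addn0 leqNgt lt_l'l.
Qed.

Section Cells.
Variable s : nat.

(* The pairs (i, l) of the header. *)
Definition cell := {i : 'I_s & 'I_i.+1}.

Definition cell_height (c : cell) : nat := tag c - tagged c.

(* Encodes the order "decreasing height, then increasing block index". *)
Definition cell_key (c : cell) : nat := (s - cell_height c) * s + tag c.

Lemma cell_key_inj : injective cell_key.
Proof.
move=> [i l] [j l']; rewrite /cell_key /cell_height /= => eq_key.
have eq_ij : i = j.
  apply/val_inj; move/(congr1 (modn^~ s)): eq_key.
  by rewrite !modnMDl !modn_small.
subst j; have := ltn_ord i; have := ltn_ord l; have := ltn_ord l' => *.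
by have -> : l = l' by apply/val_inj => /=; nia.
Qed.

Lemma leq_cell_key (c d : cell) :
  (tagged c + (tag d - tag c) <= tagged d)%N -> (cell_key c <= cell_key d)%N.
Proof.
case: c d => [i l] [j l']; rewrite /cell_key /cell_height /=.
have := ltn_ord i; have := ltn_ord j; have := ltn_ord l; have := ltn_ord l'.
nia.
Qed.

Lemma enum_cellE :
  enum {: cell} = [seq Tagged (fun i : 'I_s => 'I_i.+1) l
                    | i : 'I_s <- enum 'I_s, l : 'I_i.+1 <- enum 'I_i.+1].
Proof.
rewrite enumT unlock /= /tag_enum; congr flatten; rewrite enumT.
by apply: eq_map => i; rewrite enumT.
Qed.

Definition cell_enum : seq cell := sort (relpre cell_key leq) (enum {: cell}).

Definition ncells : nat := size cell_enum.

Definition cell_at (k : 'I_ncells) : cell := tnth (in_tuple cell_enum) k.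

Lemma perm_cell_enum : perm_eq cell_enum (enum {: cell}).
Proof. by rewrite perm_sort. Qed.

Lemma cell_at_inj : injective cell_at.
Proof.
have uniq_enum : uniq cell_enum by rewrite (perm_uniq perm_cell_enum) enum_uniq.
move=> k1 k2; rewrite /cell_at !(tnth_nth (cell_at k1)) => /= eq_k.
apply/val_inj/eqP.
by rewrite -(nth_uniq (cell_at k1) (ltn_ord k1) (ltn_ord k2) uniq_enum) eq_k.
Qed.

Lemma ltn_cell_key_at (k1 k2 : 'I_ncells) :
  (k1 < k2)%N -> (cell_key (cell_at k1) < cell_key (cell_at k2))%N.
Proof.
move=> lt_k; rewrite ltn_neqAle (inj_eq (inj_comp cell_key_inj cell_at_inj)).
rewrite -val_eqE (ltn_eqF lt_k) /= /cell_at !(tnth_nth (cell_at k1)) /=.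
have sorted_enum : sorted (relpre cell_key leq) cell_enum.
  by apply: sort_sorted => c d; exact: leq_total.
exact: (sorted_ltn_nth (relpre_trans leq_trans) _ sorted_enum)
  _ _ (ltn_ord k1) (ltn_ord k2) lt_k.
Qed.
End Cells.

Section Reordering.
Variables (F : fieldType) (s : nat) (n : 'I_s -> nat).
Local Notation N := (\sum_(i < s) bsz n i)%N.

Definition cell_idx (c : cell s) (r : 'I_(n (tag c))) : 'I_N :=
  Rank (tag c) (Rank (tagged c) r : 'I_(bsz n (tag c))).
Arguments cell_idx : clear implicits.

Lemma cell_idx_inj (c d : cell s) r r' :
  cell_idx c r = cell_idx d r' -> c = d /\ val r = val r'.
Proof.
case: c d r r' => [i l] [j l'] /= r r' /(congr1 val)/eqP.
rewrite /cell_idx /= eq_Rank => /andP[/eqP eq_ij]; subst j.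
move=> /eqP/val_inj/(congr1 val)/eqP.
by rewrite eq_Rank => /andP[/eqP -> /eqP].
Qed.

Definition cell_size (k : 'I_(ncells s)) : nat := n (tag (cell_at k)).
Local Notation N' := (\sum_(k < ncells s) cell_size k)%N.

Definition reorder (x : 'I_N') : 'I_N := cell_idx (cell_at (sig1 x)) (sig2 x).

Lemma reorder_Rank k (a : 'I_(cell_size k)) :
  reorder (Rank k a) = cell_idx (cell_at k) a.
Proof.
have cell_idx_congr k' (a' : 'I_(cell_size k')) : k' = k -> val a' = val a ->
    cell_idx (cell_at k') a' = cell_idx (cell_at k) a.
  by move=> eq_k; subst k' => /val_inj ->.
by apply: cell_idx_congr; [exact: Rank1K | rewrite Rank2K].
Qed.

Lemma reorder_inj : injective reorder.
Proof.
move=> x y; rewrite -[x]sig2K -[y]sig2K !reorder_Rank.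
move=> /cell_idx_inj[/cell_at_inj eq_k]; move: (sig2 x) (sig2 y); rewrite eq_k.
by move=> a b /val_inj ->.
Qed.

Lemma sum_cell_size : N' = N.
Proof.
rewrite /cell_size /cell_at -(big_tnth _ _ _ xpredT (fun c => n (tag c))).
rewrite (perm_big _ (perm_cell_enum s)) big_enum /=.
by rewrite -(sig_big_dep xpredT (fun _ _ => true) (fun i _ => n i)).
Qed.

Lemma reorder_bij : bijective reorder.
Proof.
by apply: inj_card_bij; [exact: reorder_inj | rewrite !card_ord sum_cell_size].
Qed.

Variables (B : 'M[F]_N) (C : forall i j : 'I_s, nat -> 'M[F]_(n i, n j)).
Hypothesis hC : forall i j : 'I_s, submxblock B i j = LBm i.+1 j.+1 (C i j).

Definition cell_block (c d : cell s) : 'M[F]_(n (tag c), n (tag d)) :=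
  if (tagged c + (tag d - tag c) <= tagged d)%N
  then (-1) ^+ tagged c *:
         C (tag c) (tag d) (tagged d - (tag d - tag c) - tagged c).+1
  else 0.

Definition cell_diag (c : cell s) : 'M[F]_(n (tag c)) :=
  (-1) ^+ tagged c *: C (tag c) (tag c) 1.

Lemma cell_blockE c d r r' :
  B (cell_idx c r) (cell_idx d r') = cell_block c d r r'.
Proof.
case: c d r r' => [i l] [j l'] r r' /=.
have -> : B (cell_idx _ r) (cell_idx _ r') =
          submxblock (submxblock B i j) l l' r r' by rewrite !mxE.
by rewrite hC mxblockK subSS.
Qed.

Lemma cell_block_eq0 c d : (cell_key d < cell_key c)%N -> cell_block c d = 0.
Proof. by rewrite /cell_block ltnNge; case: ifP => // /leq_cell_key ->. Qed.

Lemma cell_block_diag c : cell_block c c = cell_diag c.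
Proof. by rewrite /cell_block subnn addn0 leqnn subn0 subnn. Qed.

Definition reordered : 'M[F]_N' := mxsub reorder reorder B.

Lemma submxblock_reordered k k' :
  submxblock reordered k k' = cell_block (cell_at k) (cell_at k').
Proof. by apply/matrixP => a b; rewrite !mxE !reorder_Rank cell_blockE. Qed.

Lemma reordered_utrig (k k' : 'I_(ncells s)) :
  (k' < k)%N -> submxblock reordered k k' = 0.
Proof.
by move=> lt_k; rewrite submxblock_reordered cell_block_eq0 ?ltn_cell_key_at.
Qed.

Lemma submxblock_reordered_diag k :
  submxblock reordered k k = cell_diag (cell_at k).
Proof. by rewrite submxblock_reordered cell_block_diag. Qed.

Lemma char_poly_reordered :
  char_poly B =
  \prod_(i < s) \prod_(l < i.+1) char_poly ((-1) ^+ l *: C i i 1).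
Proof.
rewrite -(char_poly_mxsub_bij B reorder_bij).
rewrite (char_poly_mxblock_utrig reordered_utrig).
under eq_bigr do rewrite submxblock_reordered_diag.
rewrite /cell_at -(big_tnth _ _ _ xpredT (fun c => char_poly (cell_diag c))).
rewrite (perm_big _ (perm_cell_enum s)) big_enum /=.
by rewrite -(sig_big_dep xpredT (fun _ _ => true)
  (fun (i : 'I_s) (l : 'I_i.+1) => char_poly ((-1) ^+ l *: C i i 1))).
Qed.

Lemma perm_diag_reordered :
  perm_eq [seq sqm (submxblock reordered k k) | k <- enum 'I_(ncells s)]
          (expected_diag (fun i => C i i 1)).
Proof.
have -> : [seq sqm (submxblock reordered k k) | k <- enum 'I_(ncells s)] =
          [seq sqm (cell_diag c) | c <- cell_enum s].
  have /= <- := map_tnth_enum (in_tuple (cell_enum s)); rewrite -map_comp.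
  by apply: eq_map => k /=; rewrite submxblock_reordered_diag.
apply: perm_trans (perm_map _ (perm_cell_enum s)) _.
rewrite enum_cellE map_flatten -map_comp /expected_diag.
elim: (enum 'I_s) => // i is' IHis; apply: (perm_cat _ IHis).
pose h (b : bool) := sqm ((-1) ^+ b *: C i i 1).
rewrite [X in perm_eq X _]/= -map_comp (@eq_map _ _ _ (h \o odd \o val)).
  rewrite map_comp val_enum_ord.
  by have := perm_map_odd_iota h i.+1; rewrite /h expr0 expr1 scale1r scaleN1r.
by move=> l; rewrite /= /cell_diag /h signr_odd.
Qed.
End Reordering.

Theorem lemma4p8 (F : fieldType) (s : nat) (n : 'I_s -> nat)
  (B : 'M[F]_(\sum_(i < s) bsz n i))
  (hAB : Amx F n *m B + B *m Amx F n = 0)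
  (C : forall i j : 'I_s, nat -> 'M[F]_(n i, n j))
  (hC : forall i j : 'I_s,
      submxblock B i j = LBm i.+1 j.+1 (C i j)) :
  (* (1) similarity to a block upper-triangular matrix with prescribed
         diagonal blocks, up to order *)
  (exists (K : nat) (m : 'I_K -> nat) (T : 'M[F]_(\sum_(k < K) m k))
          (P : 'M[F]_(\sum_(i < s) bsz n i, \sum_(k < K) m k))
          (Q : 'M[F]_(\sum_(k < K) m k, \sum_(i < s) bsz n i)),
      [/\ P *m Q = 1%:M, Q *m P = 1%:M, B = P *m T *m Q,
          (forall k l : 'I_K, (l < k)%N -> submxblock T k l = 0)
        & perm_eq [seq sqm (submxblock T k k) | k <- enum 'I_K]
                  (expected_diag (fun i => C i i 1%N))])
  /\
  (* (2) *)
  char_poly B = \prod_(i < s) char_poly (submxblock B i i)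
  /\
  (* (3) *)
  char_poly B = \prod_(i < s) (char_poly (C i i 1%N) ^+ uphalf i.+1
                              * char_poly (- C i i 1%N) ^+ (i.+1)./2).
Proof.
split.
  pose f := @reorder s n; have f_bij : bijective f := reorder_bij n.
  exists (ncells s), (cell_size n), (reordered B), (colsub f 1%:M),
    (rowsub f 1%:M).
  split.
  - exact: mul_colsub1_rowsub1.
  - exact/mul_rowsub1_colsub1/bij_inj.
  - exact: mxsub_bij_conj.
  - exact: reordered_utrig hC.
  - exact: perm_diag_reordered hC.
rewrite (char_poly_reordered hC); split; apply: eq_bigr => i _.
  by rewrite hC char_poly_LBm.
exact: prod_char_poly_signed.
Qed.
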